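(* Let $n\ge1$, $0<T\le\infty$, $a\in\mathbb{R}$, and let $0\le u_0\in C(\mathbb{R}^n)$ with $u_0\not\equiv0$. If $0\le\mu\in\mathcal{Z}_{T,a}$ satisfies $$\mu(x,t)\ge u_0(x)+\int_0^t\mathcal{B}\mu(x,\tau)\,d\tau\qquad\text{on }Q_T,$$ then for every $\delta>1$ and $0<t_0<T$ there is a constant $C_0=C_0(\delta,t_0,u_0)>0$ such that $$\int_0^{t_0}\mathcal{B}\mu(x,\tau)\,d\tau\ge C_0e^{-\delta|x|}\qquad(x\in\mathbb{R}^n).$$ In particular, if $0<p<1$, $V\ge0$ is continuous, $u$ is an s-supersolution of $\partial_tu-\Delta\partial_tu=\Delta u+Vu^p$, $u(\cdot,0)=u_0$, on $Q_T$ and $\mu=e^tu$, then $$\mu(x,t_0)\ge u_0(x)+\int_0^{t_0}\mathcal{B}\mu\,d\tau+\int_0^{t_0}e^{(1-p)\tau}\mathcal{B}[V\mu^p]\,d\tau\ge C_0e^{-\delta|x|}\qquad(x\in\mathbb{R}^n).$$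
   Context: $\mathcal{B}\varphi=B*\varphi$, $B=\mathcal{F}^{-1}((1+|\xi|^2)^{-1})$. $BC_a$: continuous functions with $|\varphi(x)|\le C|x|^a$ for large $|x|$; $\mathcal{Z}_{T,a}=C([0,T);BC_a)$, $Q_T=\mathbb{R}^n\times[0,T)$. $u$ is an s-supersolution on $Q_T$ if $\mu=e^tu\in\mathcal{Z}_{T,a}$ and $\mu(t)\ge u_0+\int_0^t\mathcal{B}\mu\,d\tau+\int_0^te^{(1-p)\tau}\mathcal{B}[V\mu^p]\,d\tau$ on $Q_T$. *)

From HB Require Import structures.
From mathcomp Require Import all_boot all_order all_algebra.
From mathcomp Require Import all_classical all_reals all_analysis.
Set Implicit Arguments. Unset Strict Implicit. Unset Printing Implicit Defensive.
Import Order.TTheory GRing.Theory Num.Theory.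
Import numFieldNormedType.Exports.
Local Open Scope classical_set_scope.
Local Open Scope ring_scope.

Section Defs.
Variable R : realType.

Definition enorm (n : nat) (x : 'rV[R]_n) : R :=
  Num.sqrt (\sum_(i < n) x ord0 i ^+ 2).

(* Lebesgue integral over R^n of a function with values in \bar R,
   computed as iterated one-dimensional Lebesgue integrals (Tonelli);
   only used for nonnegative integrands. *)
Definition lint (g : R -> \bar R) : \bar R :=
  (\int[@lebesgue_measure R]_(s in [set: R]) g s)%E.

Fixpoint intRn (n : nat) : ('rV[R]_n -> \bar R) -> \bar R :=
  match n return ('rV[R]_n -> \bar R) -> \bar R with
  | 0 => fun f => f 0%R
  | m.+1 => fun f =>
      lint (fun s : R => intRn (fun (y : 'rV[R]_m) => f (row_mx (\row_(j < 1) s) y)))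
  end.

(* The Bessel kernel B = F^{-1}((1+|xi|^2)^{-1}), i.e. the fundamental
   solution of (1 - Delta) on R^n, written via its subordination formula
   B(x) = int_0^oo (4 pi s)^{-n/2} e^{-|x|^2/(4s)} e^{-s} ds  (in \bar R). *)
Definition Bessel (n : nat) (x : 'rV[R]_n) : \bar R :=
  \int[(@lebesgue_measure R)]_(s in `]0%R, +oo[)
     ((powR (4 * pi * s) (- (n%:R / 2))) *
      expR (- (enorm x ^+ 2 / (4 * s))) * expR (- s))%:E%E.

Definition Bop (n : nat) (phi : 'rV[R]_n -> R) (x : 'rV[R]_n) : \bar R :=
  intRn (fun y => (Bessel (x - y) * (phi y)%:E)%E).

Definition BC (n : nat) (a : R) (phi : 'rV[R]_n -> R) : Prop :=
  continuous phi /\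
  exists C r : R, forall x, r <= enorm x -> `|phi x| <= C * powR (enorm x) a.

(* Z_{T,a} = C([0,T); BC_a), continuity in t w.r.t. the weighted sup norm
   sup_x |phi x| / (1+|x|)^a.  mu x t is the value at (x,t). *)
Definition Zspace (n : nat) (T : \bar R) (a : R) (mu : 'rV[R]_n -> R -> R) : Prop :=
  (forall t, 0 <= t -> (t%:E < T)%E -> BC a (fun x => mu x t)) /\
  (forall t1, 0 <= t1 -> (t1%:E < T)%E -> forall e, 0 < e ->
     exists d, 0 < d /\ forall t, 0 <= t -> (t%:E < T)%E -> `|t - t1| < d ->
       forall x, `|mu x t - mu x t1| <= e * powR (1 + enorm x) a).

Definition lintI (t : R) (g : R -> \bar R) : \bar R :=
  (\int[@lebesgue_measure R]_(tau in `[0%R, t]) g tau)%E.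

Definition intB (n : nat) (mu : 'rV[R]_n -> R -> R) (x : 'rV[R]_n) (t : R) : \bar R :=
  lintI t (fun tau => Bop (fun y => mu y tau) x).

Definition intBV (n : nat) (p : R) (V : 'rV[R]_n -> R) (mu : 'rV[R]_n -> R -> R)
  (x : 'rV[R]_n) (t : R) : \bar R :=
  lintI t (fun tau =>
     ((expR ((1 - p) * tau))%:E * Bop (fun y => (V y * powR (mu y tau) p)%R) x)%E).

Definition s_supersolution (n : nat) (T : \bar R) (a p : R) (V : 'rV[R]_n -> R)
  (u0 : 'rV[R]_n -> R) (u : 'rV[R]_n -> R -> R) : Prop :=
  let mu := fun x t => expR t * u x t in
  Zspace T a mu /\
  forall x t, 0 <= t -> (t%:E < T)%E ->
    ((u0 x)%:E + intB mu x t + intBV p V mu x t <= (mu x t)%:E)%E.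

End Defs.

From HB Require Import structures.
From mathcomp Require Import all_boot all_order all_algebra.
From mathcomp Require Import all_classical all_reals all_analysis.
From mathcomp Require Import ring lra.
Set Implicit Arguments. Unset Strict Implicit. Unset Printing Implicit Defensive.
Import Order.TTheory GRing.Theory Num.Theory.
Import numFieldNormedType.Exports.
Local Open Scope classical_set_scope.
Local Open Scope ring_scope.

(* If u0 > 0 somewhere, continuity gives u0 >= c > 0 on a small cube Q.  Integrating the
   subordination formula for the Bessel kernel over the window s in [L/2 + 1, L/2 + 2],
   with L = q |x|, gives B(x - y) >= k e^{-(q + eps) |x|} for y in Q: the factor q > 1
   absorbs the shift by y and eps > 0 absorbs the polynomial factor (4 pi s)^{-n/2}.
   Taking q + eps = delta yields B u0 (x) >= k' e^{-delta |x|}.  Since B mu >= 0, the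
   supersolution inequality forces mu(., tau) >= u0, so by monotonicity of B the time
   integral over [0, t0] is at least t0 k' e^{-delta |x|}; the V-term is nonnegative. *)

Section BesselPotential.
Variable R : realType.
Local Notation leb := (@lebesgue_measure R).

(* No measurability is needed: a nonnegative integral is the supremum of the
   integrals of the simple functions below the integrand. *)
Lemma ge0_le_integral_subset (D1 D2 : set R) (f g : R -> \bar R) :
  (forall x, D1 x -> 0 <= f x)%E -> (forall x, D2 x -> 0 <= g x)%E ->
  (forall x, D1 x -> D2 x /\ (f x <= g x)%E) ->
  (\int[leb]_(x in D1) f x <= \int[leb]_(x in D2) g x)%E.
Proof.
move=> f0 g0 fg; rewrite ge0_integralE // [in leRHS]ge0_integralE //.
apply: ereal_sup_le => _ [h /= hf <-]; exists h => //= x.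
apply: le_trans (hf x) _; rewrite /patch.
have [/set_mem D1x|_] := boolP (x \in D1).
  by have [D2x fgx] := fg x D1x; rewrite ifT ?inE.
by case: ifPn => [/set_mem /g0|].
Qed.

Lemma ge0_integral_ge_itv (D : set R) (g : R -> \bar R) (a b c : R) :
  a < b -> 0 <= c -> `[a, b] `<=` D -> (forall s, D s -> 0 <= g s)%E ->
  (forall s, a <= s <= b -> (c%:E <= g s)%E) ->
  ((c * (b - a))%:E <= \int[leb]_(s in D) g s)%E.
Proof.
move=> ab c0 abD g0 cg.
have leb_ab : leb `[a, b] = (b - a)%:E by rewrite lebesgue_measure_itv /= lte_fin ab.
rewrite EFinM -leb_ab -integral_cst //.
apply: ge0_le_integral_subset => // x xab; split; first exact: abD.
by apply: cg; move: xab; rewrite /= in_itv.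
Qed.

Definition cube (m : nat) (c : 'rV[R]_m) (r : R) : set 'rV[R]_m :=
  [set y | forall j, `|c ord0 j - y ord0 j| < r].

Lemma intRn_ge0 m (f : 'rV[R]_m -> \bar R) :
  (forall y, 0 <= f y)%E -> (0 <= intRn f)%E.
Proof.
elim: m f => [|m IH] f f0 /=; first exact: f0.
by apply: integral_ge0 => s _; apply: IH.
Qed.

Lemma le_intRn m (f g : 'rV[R]_m -> \bar R) :
  (forall y, 0 <= f y)%E -> (forall y, f y <= g y)%E -> (intRn f <= intRn g)%E.
Proof.
elim: m f g => [|m IH] f g f0 fg /=; first exact: fg.
apply: ge0_le_integral_subset => s _; first exact: intRn_ge0.
  by apply: intRn_ge0 => y; exact: le_trans (f0 _) (fg _).
by split => //; apply: IH.
Qed.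

Lemma intRn_ge_cube m (f : 'rV[R]_m -> \bar R) (c : 'rV[R]_m) (r k : R) :
  0 < r -> 0 <= k -> (forall y, 0 <= f y)%E ->
  (forall y, cube c r y -> (k%:E <= f y)%E) -> ((k * r ^+ m)%:E <= intRn f)%E.
Proof.
elim: m f c => [|m IH] f c r0 k0 f0 fc /=.
  by rewrite expr0 mulr1; apply: fc => -[].
pose c0 := c ord0 ord0.
have -> : k * r ^+ m.+1 = k * r ^+ m * ((c0 + r / 2) - (c0 - r / 2)).
  by rewrite exprS; field.
apply: ge0_integral_ge_itv => //; first by lra.
- by rewrite mulr_ge0 // exprn_ge0 // ltW.
- by move=> s _; apply: intRn_ge0.
move=> s /andP[s1 s2]; apply: (IH _ (rsubmx (c : 'rV_(1 + m)))) => // y yc.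
apply: fc => j; rewrite -[c](hsubmxK (c : 'rV_(1 + m))) !mxE.
case: splitP => l _; last exact: yc.
rewrite !mxE (ord1 l) (_ : lshift m ord0 = ord0); last exact: val_inj.
by rewrite ltr_distlC -/c0; apply/andP; split; lra.
Qed.

Lemma Bessel_ge0 m (z : 'rV[R]_m) : (0 <= Bessel z)%E.
Proof.
apply: integral_ge0 => s _.
by rewrite lee_fin !mulr_ge0 ?powR_ge0 ?expR_ge0.
Qed.

Lemma Bop_ge0 m (phi : 'rV[R]_m -> R) x :
  (forall y, 0 <= phi y) -> (0 <= Bop phi x)%E.
Proof.
move=> phi0; apply: intRn_ge0 => y.
by rewrite mule_ge0 ?Bessel_ge0 ?lee_fin.
Qed.

Lemma le_Bop m (phi psi : 'rV[R]_m -> R) x :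
  (forall y, 0 <= phi y) -> (forall y, phi y <= psi y) -> (Bop phi x <= Bop psi x)%E.
Proof.
move=> phi0 phi_psi; apply: le_intRn => y.
  by rewrite mule_ge0 ?Bessel_ge0 ?lee_fin.
by rewrite lee_pmul ?Bessel_ge0 ?lee_fin.
Qed.

Lemma enorm_ge0 m (v : 'rV[R]_m) : 0 <= enorm v.
Proof. exact: sqrtr_ge0. Qed.

Lemma enorm_sqr m (v : 'rV[R]_m) : enorm v ^+ 2 = \sum_(i < m) v ord0 i ^+ 2.
Proof. by rewrite sqr_sqrtr // sumr_ge0 // => i _; exact: sqr_ge0. Qed.

Lemma enorm_sqr_cube m (c y : 'rV[R]_m) r :
  cube c r y -> enorm y ^+ 2 <= \sum_(i < m) (`|c ord0 i| + r) ^+ 2.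
Proof.
move=> yc; rewrite enorm_sqr; apply: ler_sum => i _.
rewrite -real_normK ?num_real //; apply: lerXn2r; rewrite ?nnegrE //.
  by rewrite addr_ge0 // (le_trans _ (ltW (yc i))).
apply: le_trans (_ : `|c ord0 i| + `|c ord0 i - y ord0 i| <= _); last first.
  by rewrite lerD2l ltW.
by rewrite -[X in `|X|](subKr (c ord0 i)) ler_normB.
Qed.

Lemma enormB_sqr_le m (x y : 'rV[R]_m) (eta : R) : 0 < eta ->
  enorm (x - y) ^+ 2 <= (1 + eta) * enorm x ^+ 2 + (1 + eta^-1) * enorm y ^+ 2.
Proof.
move=> eta0; rewrite !enorm_sqr !mulr_sumr -big_split /=; apply: ler_sum => i _.
rewrite !mxE; set a := x ord0 i; set b := y ord0 i.
have -> : (1 + eta) * a ^+ 2 + (1 + eta^-1) * b ^+ 2 =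
          (a - b) ^+ 2 + (eta * a + b) ^+ 2 / eta by field; rewrite gt_eqF.
by rewrite lerDl divr_ge0 ?sqr_ge0 ?ltW.
Qed.

(* Each factor of the subordination integrand is bounded below on the window
   [L/2 + 1 <= s <= L/2 + 2], which has length 1. *)
Lemma Bessel_ge_sqr_le m (z : 'rV[R]_m) (L K : R) : 0 <= L -> 0 <= K ->
  enorm z ^+ 2 <= L ^+ 2 + K ->
  ((powR (4 * pi * (L / 2 + 2)) (- (m%:R / 2)) * expR (- (L + K / 4 + 2)))%:E
     <= Bessel z)%E.
Proof.
move=> L0 K0 hz; have pi0 := pi_gt0 R.
set P := powR _ _.
have -> : expR (- (L + K / 4 + 2)) = expR (- (L / 2 + K / 4)) * expR (- (L / 2 + 2)).
  by rewrite -expRD; congr expR; field.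
rewrite mulrA; set c := P * _ * _.
have -> : c = c * (L / 2 + 2 - (L / 2 + 1)) by ring.
apply: ge0_integral_ge_itv.
- lra.
- by rewrite !mulr_ge0 ?powR_ge0 ?expR_ge0.
- by move=> s; rewrite /= !in_itv /= andbT => /andP[s1 _]; lra.
- by move=> s _; rewrite lee_fin !mulr_ge0 ?powR_ge0 ?expR_ge0.
move=> s /andP[s1 s2]; have s0 : 0 < s by lra.
rewrite lee_fin ler_pM ?mulr_ge0 ?powR_ge0 ?expR_ge0 //; last first.
  by rewrite ler_expR lerN2.
rewrite ler_pM ?powR_ge0 ?expR_ge0 //.
  rewrite /P !powRN lef_pV2 ?posrE ?powR_gt0 ?mulr_gt0 //; last by lra.
  by apply: ge0_ler_powR; rewrite ?nnegrE ?divr_ge0 ?ler0n //; nra.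
rewrite ler_expR lerN2 ler_pdivrMr; last by rewrite mulr_gt0 //; lra.
have : 0 <= L * (s - (L / 2 + 1)) by rewrite mulr_ge0 //; lra.
have : 0 <= K * (s - 1) by rewrite mulr_ge0 //; lra.
nra.
Qed.

Lemma expr_affine_le_expR m (A B eps rho : R) : (0 < m)%N ->
  0 <= A -> 0 <= B -> 0 < eps -> 0 <= rho ->
  (A + B * rho) ^+ m <= (A + B * m%:R / eps) ^+ m * expR (eps * rho).
Proof.
move=> m0 A0 B0 eps0 rho0; have m_gt0 : 0 < m%:R :> R by rewrite ltr0n.
set M := A + B * m%:R / eps; set w := eps * rho / m%:R.
have M0 : 0 <= M by rewrite addr_ge0 // !mulr_ge0 // invr_ge0 ltW.
have w0 : 0 <= w by rewrite divr_ge0 ?mulr_ge0 ?ler0n // ltW.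
have le_Mw : A + B * rho <= M * (1 + w).
  have -> : M * (1 + w) = A + B * rho + (A * w + B * m%:R / eps).
    by rewrite /M /w; field; rewrite !gt_eqF.
  by rewrite lerDl addr_ge0 ?mulr_ge0 ?invr_ge0 ?ler0n // ltW.
have -> : eps * rho = m%:R * w by rewrite /w; field; rewrite gt_eqF.
rewrite expRM_natl -exprMn; apply: lerXn2r; rewrite ?nnegrE.
- by rewrite addr_ge0 // mulr_ge0.
- by rewrite mulr_ge0 ?expR_ge0.
apply: le_trans le_Mw _; apply: ler_wpM2l => //.
exact: expR_ge1Dx.
Qed.

Lemma Bessel_ge_expR m (q K eps : R) : (0 < m)%N -> 0 <= q -> 0 <= K -> 0 < eps ->
  exists2 k, 0 < k & forall (z : 'rV[R]_m) rho, 0 <= rho ->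
    enorm z ^+ 2 <= (q * rho) ^+ 2 + K ->
    ((k * expR (- ((q + eps) * rho)))%:E <= Bessel z)%E.
Proof.
move=> m0 q0 K0 eps0; have pi2 := pi_ge2 R.
set M := 8 * pi + 2 * pi * q * m%:R / eps.
have M0 : 0 < M.
  have : 0 <= 2 * pi * q * m%:R / eps.
    by rewrite divr_ge0 ?(ltW eps0) // !mulr_ge0 ?ler0n //; lra.
  rewrite /M; lra.
exists ((M ^+ m)^-1 * expR (- (K / 4 + 2))).
  by rewrite mulr_gt0 ?expR_gt0 // invr_gt0 exprn_gt0.
move=> z rho rho0 hz.
have qrho0 : 0 <= q * rho by rewrite mulr_ge0.
apply: le_trans (Bessel_ge_sqr_le qrho0 K0 hz); rewrite lee_fin.
set y := 4 * pi * (q * rho / 2 + 2).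
have y1 : 1 <= y by rewrite /y; nra.
have le_y : powR y (m%:R / 2) <= M ^+ m * expR (eps * rho).
  apply: (@le_trans _ _ (powR y m%:R)).
    by rewrite ler_powR // ler_pdivrMr //; have := ler0n R m; lra.
  rewrite powR_mulrn; last by lra.
  have -> : y = 8 * pi + (2 * pi * q) * rho by rewrite /y; field.
  by apply: expr_affine_le_expR; rewrite // ?mulr_ge0 //; lra.
rewrite -mulrA; have -> : expR (- (K / 4 + 2)) * expR (- ((q + eps) * rho)) =
          (expR (eps * rho))^-1 * expR (- (q * rho + K / 4 + 2)).
  by rewrite -expRN -!expRD; congr expR; ring.
rewrite mulrA -invfM ler_wpM2r ?expR_ge0 // powRN.
rewrite lef_pV2 ?posrE ?powR_gt0 ?mulr_gt0 ?expR_gt0 ?exprn_gt0 //; lra.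
Qed.

Lemma continuous_cube_ge_half m (f : 'rV[R]_m -> R) (c : 'rV[R]_m) :
  continuous f -> 0 < f c -> exists2 r, 0 < r & forall y, cube c r y -> f c / 2 <= f y.
Proof.
move=> cf fc0; have fc20 : 0 < f c / 2 by lra.
have /cvgrPdist_lt/(_ _ fc20)/nbhs_ballP[r r0 near_c] := cf c.
exists r => // y yc; have /= : ball c r y.
  by split => // i j; rewrite (ord1 i); exact: yc.
by move/near_c; rewrite /= ltr_distlC => /andP[+ _]; lra.
Qed.

Lemma Bop_ge_expR m (phi : 'rV[R]_m -> R) (delta : R) : (0 < m)%N ->
  continuous phi -> (forall y, 0 <= phi y) -> (exists c, phi c != 0) -> 1 < delta ->
  exists2 k, 0 < k & forall x, ((k * expR (- (delta * enorm x)))%:E <= Bop phi x)%E.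
Proof.
move=> m0 cphi phi0 [c phic] delta1.
have phic0 : 0 < phi c by rewrite lt_def phic phi0.
have [r r0 phi_cube] := continuous_cube_ge_half cphi phic0.
pose q := (1 + delta) / 2; pose eps := (delta - 1) / 2; pose eta := q ^+ 2 - 1.
have eta0 : 0 < eta by rewrite /eta /q; nra.
pose K := (1 + eta^-1) * \sum_(i < m) (`|c ord0 i| + r) ^+ 2.
have K0 : 0 <= K.
  apply: mulr_ge0; first by rewrite addr_ge0 // invr_ge0 ltW.
  by apply: sumr_ge0 => i _; exact: sqr_ge0.
have q0 : 0 <= q by rewrite /q; lra.
have eps0 : 0 < eps by rewrite /eps; lra.
have [kB kB0 B_ge] := Bessel_ge_expR m0 q0 K0 eps0.
exists (kB * (phi c / 2) * r ^+ m); first by rewrite !mulr_gt0 ?exprn_gt0 //; lra.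
move=> x; set e := expR _.
have -> : kB * (phi c / 2) * r ^+ m * e = kB * e * (phi c / 2) * r ^+ m by ring.
apply: intRn_ge_cube => //.
- by rewrite /e !mulr_ge0 ?expR_ge0 ?invr_ge0 ?ler0n ?ltW.
- by move=> y; rewrite mule_ge0 ?Bessel_ge0 ?lee_fin.
move=> y yc; rewrite EFinM; apply: lee_pmul; rewrite ?lee_fin ?phi_cube //.
- by rewrite /e mulr_ge0 ?expR_ge0 ?ltW.
- by rewrite divr_ge0 ?ltW.
rewrite /e (_ : delta = q + eps); last by rewrite /q /eps; field.
apply: B_ge; first exact: enorm_ge0.
apply: le_trans (enormB_sqr_le x y eta0) _.
rewrite exprMn (_ : 1 + eta = q ^+ 2); last by rewrite /eta; ring.
by rewrite lerD2l ler_wpM2l ?enorm_sqr_cube // addr_ge0 // invr_ge0 ltW.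
Qed.

Lemma intB_ge0 m (mu : 'rV[R]_m -> R -> R) x t :
  (forall y s, 0 <= s <= t -> 0 <= mu y s) -> (0 <= intB mu x t)%E.
Proof.
move=> mu0; apply: integral_ge0 => s; rewrite /= in_itv /= => st.
by apply: Bop_ge0 => y; exact: mu0.
Qed.

Lemma intBV_ge0 m (p : R) (V : 'rV[R]_m -> R) (mu : 'rV[R]_m -> R -> R) x t :
  (forall y, 0 <= V y) -> (0 <= intBV p V mu x t)%E.
Proof.
move=> V0; apply: integral_ge0 => s _.
apply: mule_ge0; first by rewrite lee_fin expR_ge0.
by apply: Bop_ge0 => y; rewrite mulr_ge0 ?V0 ?powR_ge0.
Qed.

Lemma intB_ge m (mu : 'rV[R]_m -> R -> R) x t b : 0 < t -> 0 <= b ->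
  (forall y s, 0 <= s <= t -> 0 <= mu y s) ->
  (forall s, 0 <= s <= t -> (b%:E <= Bop (mu^~ s) x)%E) ->
  ((t * b)%:E <= intB mu x t)%E.
Proof.
move=> t0 b0 mu0 Bmu; rewrite -[X in (X * b)%:E]subr0 mulrC.
apply: ge0_integral_ge_itv => // s; rewrite /= in_itv /= => st.
by apply: Bop_ge0 => y; exact: mu0.
Qed.

Lemma intB_ge_of_supersolution m (u0 : 'rV[R]_m -> R) (k delta t0 : R) (T : \bar R)
    (mu : 'rV[R]_m -> R -> R) :
  0 < t0 -> 0 <= k -> (t0%:E < T)%E -> (forall y, 0 <= u0 y) ->
  (forall x, ((k * expR (- (delta * enorm x)))%:E <= Bop u0 x)%E) ->
  (forall x t, 0 <= t -> (t%:E < T)%E -> 0 <= mu x t) ->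
  (forall x t, 0 <= t -> (t%:E < T)%E -> ((u0 x)%:E + intB mu x t <= (mu x t)%:E)%E) ->
  forall x, ((t0 * k * expR (- (delta * enorm x)))%:E <= intB mu x t0)%E.
Proof.
move=> t00 k0 t0T u00 Bu0 mu0 mu_sup x.
have sT s : s <= t0 -> (s%:E < T)%E by move=> st; apply: le_lt_trans t0T; rewrite lee_fin.
have mu0_t0 y s : 0 <= s <= t0 -> 0 <= mu y s.
  by case/andP => s0 st; exact: mu0 _ _ s0 (sT s st).
have u0_mu y s : 0 <= s <= t0 -> u0 y <= mu y s.
  move=> /andP[s0 st]; rewrite -lee_fin; apply: le_trans (mu_sup y s s0 (sT s st)).
  rewrite leeDl // intB_ge0 // => z v /andP[v0 vs].
  by rewrite mu0_t0 // v0 (le_trans vs st).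
rewrite -mulrA; apply: intB_ge => // [|s st]; first by rewrite mulr_ge0 ?expR_ge0.
exact: le_trans (Bu0 x) (le_Bop _ u00 (fun y => u0_mu y s st)).
Qed.

End BesselPotential.

Theorem mainTheorem13 (R : realType) (n : nat) (u0 : 'rV[R]_n -> R) :
  (1 <= n)%N -> continuous u0 -> (forall x, 0 <= u0 x) -> (exists x, u0 x != 0) ->
  forall delta t0 : R, 1 < delta -> 0 < t0 ->
  exists C0 : R, 0 < C0 /\
  (forall (T : \bar R) (a : R) (mu : 'rV[R]_n -> R -> R),
     (t0%:E < T)%E -> Zspace T a mu ->
     (forall x t, 0 <= t -> (t%:E < T)%E -> 0 <= mu x t) ->
     (forall x t, 0 <= t -> (t%:E < T)%E -> ((u0 x)%:E + intB mu x t <= (mu x t)%:E)%E) ->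
     forall x, ((C0 * expR (- (delta * enorm x)))%:E <= intB mu x t0)%E) /\
  (forall (T : \bar R) (a p : R) (V : 'rV[R]_n -> R) (u : 'rV[R]_n -> R -> R),
     (t0%:E < T)%E -> 0 < p < 1 -> continuous V -> (forall x, 0 <= V x) ->
     (forall x t, 0 <= t -> (t%:E < T)%E -> 0 <= u x t) ->
     s_supersolution T a p V u0 u ->
     let mu := fun x t => expR t * u x t in
     forall x,
       ((u0 x)%:E + intB mu x t0 + intBV p V mu x t0 <= (mu x t0)%:E)%E /\
       ((C0 * expR (- (delta * enorm x)))%:E <= (u0 x)%:E + intB mu x t0 + intBV p V mu x t0)%E).
Proof.
move=> n_gt0 cu0 u00 u0_nz delta t0 delta1 t00.
have [k k0 Bu0_ge] := Bop_ge_expR n_gt0 cu0 u00 u0_nz delta1.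
have intB_ge_C0 := intB_ge_of_supersolution t00 (ltW k0) _ u00 Bu0_ge.
exists (t0 * k); split; first exact: mulr_gt0.
split=> [T a mu t0T _|T a p V u t0T _ _ V0 u_ge0 [_ u_sup] mu x]; first exact: intB_ge_C0.
have mu0 y t : 0 <= t -> (t%:E < T)%E -> 0 <= mu y t.
  by move=> t_ge0 tT; rewrite mulr_ge0 ?expR_ge0 ?u_ge0.
have mu_sup y t : 0 <= t -> (t%:E < T)%E -> ((u0 y)%:E + intB mu y t <= (mu y t)%:E)%E.
  by move=> t_ge0 tT; apply: le_trans (u_sup y t t_ge0 tT); rewrite leeDl ?intBV_ge0.
split; first exact: u_sup (ltW t00) t0T.
apply: le_trans (intB_ge_C0 T mu t0T mu0 mu_sup x) _.
rewrite -addeA lee_paddl ?lee_fin //.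
exact: leeDl (intBV_ge0 p mu x t0 V0).
Qed.
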